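(* Let $\lambda>0$, ${\rm T}>0$, $\mu>0$, $\sigma^2\ge 0$, $\alpha>2$ and $0<a\le 1$. For $\gamma_1\in(0,a)$ put $\gamma_2=a-\gamma_1$ and $$\mathrm{DSR}(\gamma_1)=\lambda\gamma_2\,p_{\rm cov}({\rm T},\lambda\gamma_1,\alpha).$$ If $\gamma_1^*\in(0,a)$ is a point at which $\mathrm{DSR}$ attains its maximum over $(0,a)$, then $\gamma_1^*<a/2<\gamma_2^*=a-\gamma_1^*< a\le 1$.
   Context: For $x>0$ the coverage probability is $$p_{\rm cov}({\rm T},x,\alpha)=\pi x\int_0^\infty e^{-\pi x r\,\beta({\rm T},\alpha)-\mu{\rm T}\sigma^2 r^{\alpha/2}}\,dr,$$ where $$\beta({\rm T},\alpha)=\frac{2(\mu{\rm T})^{2/\alpha}}{\alpha}\,\mathbb{E}\Big[g^{2/\alpha}\big(\Gamma(-2/\alpha,\mu{\rm T}g)-\Gamma(-2/\alpha)\big)\Big]>0,$$ with $g$ exponentially distributed with rate $\mu$ and $\Gamma(\cdot,\cdot)$ the upper incomplete Gamma function. This is the SINR coverage probability of a typical receiver served by its nearest transmitter when the transmitters form a homogeneous Poisson point process of intensity $x$, with Rayleigh fading, path loss exponent $\alpha$, transmit power $1/\mu$ and noise power $\sigma^2$. In the single-file model, the users form a homogeneous PPP of intensity $\lambda$. Independently, each user is a transmitter (fraction $\gamma_1$) or a receiver (fraction $\gamma_2$), with $\gamma_1+\gamma_2=a$. $\mathrm{DSR}$ denotes the density of successful receptions. *)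

From Stdlib Require Import Reals Lra ClassicalEpsilon.
Open Scope R_scope.

(* [improper_int_from lo f l]: the improper Riemann integral of f over
   (lo, +oo) converges to l, i.e. RiemannInt f over [u, b] tends to l as
   u -> lo+ and b -> +oo. (f is never evaluated at lo itself, so
   integrable singularities at lo are allowed.) *)
Definition improper_int_from (lo : R) (f : R -> R) (l : R) : Prop :=
  forall eps, 0 < eps ->
    exists d M, 0 < d /\
      forall u b, lo < u -> u < lo + d -> M < b -> u < b ->
        exists pr : Riemann_integrable f u b, Rabs (RiemannInt pr - l) < eps.

(* The value of the improper integral int_lo^oo f (chosen by Hilbert's
   epsilon; the limit is unique whenever it exists; 0 if it does not). *)
Definition IntFrom (lo : R) (f : R -> R) : R :=
  epsilon (inhabits 0) (fun l => improper_int_from lo f l).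

Definition euler_gamma (s : R) : R :=
  IntFrom 0 (fun t => Rpower t (s - 1) * exp (- t)).

(* Gamma extended to -1 < s < 0 by the functional equation
   Gamma(s) = Gamma(s+1)/s (analytic continuation). *)
Definition gamma_ext (s : R) : R :=
  if Rlt_dec 0 s then euler_gamma s else euler_gamma (s + 1) / s.

Definition upper_gamma (s x : R) : R :=
  IntFrom x (fun t => Rpower t (s - 1) * exp (- t)).

(* beta(T, alpha) = 2 (mu T)^(2/alpha) / alpha *
     E[ g^(2/alpha) (Gamma(-2/alpha, mu T g) - Gamma(-2/alpha)) ],
   g ~ Exp(rate mu), density mu e^(-mu g) on (0, oo). *)
Definition beta_fn (mu T alpha : R) : R :=
  2 * Rpower (mu * T) (2 / alpha) / alpha *
  IntFrom 0 (fun g => mu * exp (- (mu * g)) *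
     (Rpower g (2 / alpha) *
      (upper_gamma (- (2 / alpha)) (mu * T * g) - gamma_ext (- (2 / alpha))))).

Definition p_cov (mu sigma2 T x alpha : R) : R :=
  PI * x * IntFrom 0 (fun r =>
     exp (- (PI * x * r * beta_fn mu T alpha)
          - mu * T * sigma2 * Rpower r (alpha / 2))).

Definition DSR (lam a mu sigma2 T alpha gamma1 : R) : R :=
  lam * (a - gamma1) * p_cov mu sigma2 T (lam * gamma1) alpha.

From Stdlib Require Import Reals Lra ClassicalEpsilon.
From Coquelicot Require Import Coquelicot.
Open Scope R_scope.

(* DSR (g) = PI lam^2 g (a - g) I (lam g), where I (x) is the integral over r > 0 of
   exp (- PI x beta r - mu T sigma^2 r^(alpha/2)). Since Gamma (-2/alpha) < 0 < Gamma (-2/alpha, y),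
   beta > 0, so I is decreasing, and even I (x') >= I (x) + kappa (x - x') with kappa > 0.
   Moving g >= a/2 to g - eps costs the factor g (a - g) at most eps^2 but gains a multiple of eps
   in I, so for small eps DSR strictly increases: no maximiser lies in [a/2, a). *)

Lemma exp_le x y : x <= y -> exp x <= exp y.
Proof. intros [H | ->]; [left; apply exp_increasing | right]; auto. Qed.

Lemma Rpower_pos t p : 0 < Rpower t p.
Proof. apply exp_pos. Qed.

Lemma continuous_eps_delta (f : R -> R) x :
  continuous f x -> forall eps, 0 < eps ->
  exists d, 0 < d /\ forall y, Rabs (y - x) < d -> Rabs (f y - f x) < eps.
Proof.
  intros Hf eps Heps.
  destruct (proj2 (continuity_pt_filterlim f x) Hf eps Heps) as [d [Hd H]].
  exists d; split; auto. intros y Hy.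
  destruct (Req_dec y x) as [-> | Hne].
  - unfold Rminus; rewrite Rplus_opp_r, Rabs_R0; auto.
  - apply H; repeat split; auto.
Qed.

(* Coquelicot's versions are stated for a generic normed module and do not unify with real goals. *)
Lemma RInt_Chasles_R f a b c : ex_RInt f a b -> ex_RInt f b c ->
  RInt f a b + RInt f b c = RInt f a c.
Proof. intros. apply (RInt_Chasles (V := R_CompleteNormedModule)); auto. Qed.

Lemma RInt_swap_R f a b : ex_RInt f a b -> RInt f b a = - RInt f a b.
Proof. intros. symmetry. apply (opp_RInt_swap (V := R_CompleteNormedModule)); auto. Qed.

Lemma RInt_minus_R f g a b : ex_RInt f a b -> ex_RInt g a b ->
  RInt (fun x => f x - g x) a b = RInt f a b - RInt g a b.
Proof. intros. apply (RInt_minus (V := R_CompleteNormedModule)); auto. Qed.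

Lemma RInt_scal_R f a b c : ex_RInt f a b ->
  RInt (fun x => c * f x) a b = c * RInt f a b.
Proof. intros. apply (RInt_scal (V := R_CompleteNormedModule)); auto. Qed.

Lemma RInt_by_antiderivative (F f : R -> R) a b :
  (forall x, Rmin a b <= x <= Rmax a b -> is_derive F x (f x)) ->
  (forall x, Rmin a b <= x <= Rmax a b -> continuous f x) ->
  RInt f a b = F b - F a.
Proof.
  intros HF Hf. apply is_RInt_unique.
  apply (is_RInt_derive (V := R_CompleteNormedModule)); auto.
Qed.

Definition continuous_above (lo : R) (f : R -> R) : Prop :=
  forall x, lo < x -> continuous f x.

Lemma ex_RInt_above lo f u b :
  continuous_above lo f -> lo < u -> lo < b -> ex_RInt f u b.
Proof.
  intros Hf Hu Hb. apply (ex_RInt_continuous (V := R_CompleteNormedModule)).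
  intros z [Hz _]. apply Hf. unfold Rmin in Hz. destruct (Rle_dec u b); lra.
Qed.

Lemma continuous_RInt_upper lo f a v : continuous_above lo f -> lo < a -> lo < v ->
  continuous (RInt f a) v.
Proof.
  intros Hf Ha Hv.
  apply (continuous_RInt_1 (V := R_CompleteNormedModule) f a v (RInt f a)).
  assert (Hr : 0 < v - lo) by lra.
  exists (mkposreal _ Hr). intros y Hy.
  change (Rabs (y - v) < v - lo) in Hy. apply Rabs_def2 in Hy.
  apply (RInt_correct (V := R_CompleteNormedModule)). apply ex_RInt_above with lo; auto; lra.
Qed.

Lemma continuous_RInt_lower lo f b v : continuous_above lo f -> lo < b -> lo < v ->
  continuous (fun u => RInt f u b) v.
Proof.
  intros Hf Hb Hv.
  assert (Hr : 0 < v - lo) by lra.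
  apply continuous_ext_loc with (fun u => - RInt f b u).
  - exists (mkposreal _ Hr). intros y Hy.
    change (Rabs (y - v) < v - lo) in Hy. apply Rabs_def2 in Hy.
    rewrite (RInt_swap_R f b y) by (apply ex_RInt_above with lo; auto; lra).
    unfold opp; simpl; ring.
  - apply (continuous_opp (fun u => RInt f b u)).
    apply continuous_RInt_upper with lo; auto.
Qed.

Lemma RInt_le_widen lo f u' u b b' :
  continuous_above lo f -> (forall x, lo < x -> 0 <= f x) ->
  lo < u' -> u' <= u -> u <= b -> b <= b' -> RInt f u b <= RInt f u' b'.
Proof.
  intros Hf Hpos H1 H2 H3 H4.
  assert (Hex : forall s t, u' <= s -> u' <= t -> ex_RInt f s t)
    by (intros; apply ex_RInt_above with lo; auto; lra).
  assert (Hnn : forall s t, u' <= s <= t -> 0 <= RInt f s t).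
  { intros s t Hst. apply RInt_ge_0; try lra; auto.
    apply Hex; lra. intros; apply Hpos; lra. }
  rewrite <- (RInt_Chasles_R f u' u b') by (apply Hex; lra).
  rewrite <- (RInt_Chasles_R f u b b') by (apply Hex; lra).
  pose proof (Hnn u' u ltac:(lra)). pose proof (Hnn b b' ltac:(lra)). lra.
Qed.

Lemma improper_int_from_unique lo f l l' :
  improper_int_from lo f l -> improper_int_from lo f l' -> l = l'.
Proof.
  intros H H'. apply NNPP. intros Hne.
  set (e := Rabs (l - l') / 2).
  assert (He : 0 < e) by (assert (0 < Rabs (l - l')) by (apply Rabs_pos_lt; lra); unfold e; lra).
  destruct (H e He) as [d [M [Hd HM]]].
  destruct (H' e He) as [d' [M' [Hd' HM']]].
  set (u := lo + Rmin d d' / 2).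
  set (b := Rmax (Rmax M M') u + 1).
  assert (Hmin : 0 < Rmin d d' <= d /\ Rmin d d' <= d')
    by (split; [split; [apply Rmin_glb_lt | apply Rmin_l] | apply Rmin_r]; auto).
  assert (Hmax : M <= Rmax (Rmax M M') u /\ M' <= Rmax (Rmax M M') u /\ u <= Rmax (Rmax M M') u).
  { pose proof (Rmax_l M M'); pose proof (Rmax_r M M');
    pose proof (Rmax_l (Rmax M M') u); pose proof (Rmax_r (Rmax M M') u); lra. }
  assert (Hu : lo < u /\ u < lo + d /\ u < lo + d') by (unfold u; lra).
  assert (Hb : M < b /\ M' < b /\ u < b) by (unfold b; lra).
  destruct (HM u b) as [p Hp]; try tauto.
  destruct (HM' u b) as [p' Hp']; try tauto.
  rewrite (RiemannInt_P5 p' p) in Hp'.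
  assert (Rabs (l - l') <= Rabs (RiemannInt p - l) + Rabs (RiemannInt p - l')).
  { replace (l - l') with ((RiemannInt p - l') + - (RiemannInt p - l)) by ring.
    eapply Rle_trans; [apply Rabs_triang | rewrite Rabs_Ropp; lra]. }
  unfold e in *; lra.
Qed.

Lemma IntFrom_unique lo f l : improper_int_from lo f l -> IntFrom lo f = l.
Proof.
  intros H. apply improper_int_from_unique with lo f; auto.
  unfold IntFrom. apply epsilon_spec. exists l; auto.
Qed.

Section NonnegativeImproperIntegral.

Variables (lo M : R) (f : R -> R).
Hypothesis f_cont : continuous_above lo f.
Hypothesis f_ge0 : forall x, lo < x -> 0 <= f x.
Hypothesis f_bounded : forall u b, lo < u -> u < b -> RInt f u b <= M.

Lemma improper_int_from_lub : exists l, improper_int_from lo f l /\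
  is_lub (fun y => exists u b, lo < u /\ u < b /\ y = RInt f u b) l.
Proof.
  set (E := fun y => exists u b, lo < u /\ u < b /\ y = RInt f u b).
  assert (Hb : bound E) by (exists M; intros y [u [b [Hu [Hub ->]]]]; auto).
  assert (Hne : exists y, E y) by (exists (RInt f (lo + 1) (lo + 2)), (lo + 1), (lo + 2); repeat split; lra).
  destruct (completeness E Hb Hne) as [l [Hub Hlub]].
  exists l; split; [| split; auto].
  intros eps Heps.
  assert (Hnear : exists u0 b0, lo < u0 /\ u0 < b0 /\ l - eps < RInt f u0 b0).
  { apply NNPP. intros Hn. assert (l <= l - eps); [| lra].
    apply Hlub. intros y [u [b [Hu [Hb' ->]]]].
    apply Rnot_lt_le. intros Hlt. apply Hn. exists u, b. auto. }
  destruct Hnear as [u0 [b0 [Hu0 [Hub0 Hlt]]]].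
  exists (u0 - lo), b0. split; [lra |].
  intros u b Hu1 Hu2 Hb1 Hub'.
  exists (ex_RInt_Reals_0 _ _ _ (ex_RInt_above lo f u b f_cont Hu1 ltac:(lra))).
  rewrite <- RInt_Reals.
  assert (RInt f u0 b0 <= RInt f u b) by (apply RInt_le_widen with lo; auto; lra).
  assert (RInt f u b <= l) by (apply Hub; exists u, b; auto).
  apply Rabs_def1; lra.
Qed.

Lemma improper_int_from_IntFrom : improper_int_from lo f (IntFrom lo f).
Proof.
  destruct improper_int_from_lub as [l [Hl _]]. rewrite (IntFrom_unique _ _ _ Hl); auto.
Qed.

Lemma RInt_le_IntFrom u b : lo < u -> u < b -> RInt f u b <= IntFrom lo f.
Proof.
  intros Hu Hub. destruct improper_int_from_lub as [l [Hl [Hub' _]]].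
  rewrite (IntFrom_unique _ _ _ Hl). apply Hub'. exists u, b; auto.
Qed.

Lemma IntFrom_le_bound M' :
  (forall u b, lo < u -> u < b -> RInt f u b <= M') -> IntFrom lo f <= M'.
Proof.
  intros HM'. destruct improper_int_from_lub as [l [Hl [_ Hlub]]].
  rewrite (IntFrom_unique _ _ _ Hl). apply Hlub. intros y [u [b [Hu [Hub ->]]]]. auto.
Qed.

Lemma IntFrom_pos : (forall x, lo < x -> 0 < f x) -> 0 < IntFrom lo f.
Proof.
  intros Hpos. apply Rlt_le_trans with (RInt f (lo + 1) (lo + 2)).
  - apply RInt_gt_0; [lra | intros; apply Hpos; lra | intros; apply f_cont; lra].
  - apply RInt_le_IntFrom; lra.
Qed.

End NonnegativeImproperIntegral.

Lemma IntFrom_add_RInt_le lo M f g u0 b0 :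
  continuous_above lo f -> continuous_above lo g ->
  (forall x, lo < x -> 0 <= f x <= g x) ->
  (forall u b, lo < u -> u < b -> RInt g u b <= M) ->
  lo < u0 -> u0 < b0 ->
  IntFrom lo f + RInt (fun x => g x - f x) u0 b0 <= IntFrom lo g.
Proof.
  intros Hf Hg Hfg HM Hu0 Hub0.
  assert (Hex : forall h s t, continuous_above lo h -> lo < s -> lo < t -> ex_RInt h s t)
    by (intros; apply ex_RInt_above with lo; auto).
  assert (Hgf : continuous_above lo (fun x => g x - f x))
    by (intros x Hx; apply (continuous_minus g f); auto).
  assert (Hf_bounded : forall u b, lo < u -> u < b -> RInt f u b <= M).
  { intros u b Hu Hub. eapply Rle_trans; [| apply (HM u b Hu Hub)].
    apply RInt_le; try lra; try (apply Hex; auto; lra). intros; apply Hfg; lra. }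
  cut (IntFrom lo f <= IntFrom lo g - RInt (fun x => g x - f x) u0 b0); [lra |].
  apply (IntFrom_le_bound lo M f Hf (fun x Hx => proj1 (Hfg x Hx)) Hf_bounded).
  intros u b Hu Hub.
  set (u' := Rmin u u0). set (b' := Rmax b b0).
  assert (Hu' : lo < u' <= u /\ u' <= u0)
    by (unfold u'; repeat split; [apply Rmin_glb_lt | apply Rmin_l | apply Rmin_r]; lra).
  assert (Hb' : b <= b' /\ b0 <= b') by (unfold b'; split; [apply Rmax_l | apply Rmax_r]).
  clearbody u' b'.
  assert (RInt f u b <= RInt f u' b')
    by (apply RInt_le_widen with lo; auto; try lra; intros; apply Hfg; auto).
  assert (RInt (fun x => g x - f x) u0 b0 <= RInt (fun x => g x - f x) u' b')
    by (apply RInt_le_widen with lo; auto; try lra; intros x Hx; pose proof (Hfg x Hx); lra).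
  assert (RInt g u' b' <= IntFrom lo g)
    by (apply (RInt_le_IntFrom lo M g Hg (fun x Hx => Rle_trans _ _ _ (proj1 (Hfg x Hx)) (proj2 (Hfg x Hx))) HM); lra).
  rewrite (RInt_minus_R g f u' b') in * by (apply Hex; auto; lra).
  lra.
Qed.

Lemma improper_int_from_shift lo0 lo y f l :
  continuous_above lo0 f -> lo0 < lo -> lo < y ->
  improper_int_from lo f l -> improper_int_from y f (l - RInt f lo y).
Proof.
  intros Hf Hlo Hy H eps Heps.
  set (F := RInt f lo).
  assert (HF : forall v, lo0 < v -> continuous F v) by (intros; apply continuous_RInt_upper with lo0; auto).
  assert (Hex : forall s t, lo <= s -> lo <= t -> ex_RInt f s t)
    by (intros; apply ex_RInt_above with lo0; auto; lra).
  destruct (H (eps / 2) ltac:(lra)) as [d [M [Hd HM]]].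
  destruct (continuous_eps_delta F lo (HF lo Hlo) (eps / 4) ltac:(lra)) as [d1 [Hd1 Hlo']].
  destruct (continuous_eps_delta F y (HF y ltac:(lra)) (eps / 4) ltac:(lra)) as [d2 [Hd2 Hy']].
  assert (HF0 : F lo = 0) by (unfold F; rewrite RInt_point; reflexivity).
  set (u1 := lo + Rmin (Rmin d d1) (y - lo) / 2).
  assert (Hu1 : lo < u1 < lo + d /\ u1 < lo + d1 /\ u1 < y).
  { pose proof (Rmin_l (Rmin d d1) (y - lo)); pose proof (Rmin_r (Rmin d d1) (y - lo)).
    pose proof (Rmin_l d d1); pose proof (Rmin_r d d1).
    assert (0 < Rmin (Rmin d d1) (y - lo)) by (repeat apply Rmin_glb_lt; lra).
    unfold u1; lra. }
  exists d2, M. split; auto.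
  intros u b Hu Hu' Hb Hub.
  destruct (HM u1 b) as [p Hp]; try lra.
  exists (ex_RInt_Reals_0 _ _ _ (Hex u b ltac:(lra) ltac:(lra))).
  rewrite <- RInt_Reals in *.
  assert (A1 : Rabs (F u1 - F lo) < eps / 4) by (apply Hlo'; apply Rabs_def1; lra).
  assert (A2 : Rabs (F u - F y) < eps / 4) by (apply Hy'; apply Rabs_def1; lra).
  assert (E1 : F u1 + RInt f u1 u = F u) by (apply RInt_Chasles_R; apply Hex; lra).
  assert (E2 : RInt f u1 u + RInt f u b = RInt f u1 b) by (apply RInt_Chasles_R; apply Hex; lra).
  apply Rabs_def2 in A1. apply Rabs_def2 in A2. apply Rabs_def2 in Hp.
  unfold F in *. apply Rabs_def1; lra.
Qed.

Lemma IntFrom_Chasles lo0 x y f :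
  continuous_above lo0 f -> lo0 < x -> x < y ->
  improper_int_from x f (IntFrom x f) -> IntFrom x f = RInt f x y + IntFrom y f.
Proof.
  intros Hf Hx Hxy H.
  rewrite (IntFrom_unique y f _ (improper_int_from_shift lo0 x y f _ Hf Hx Hxy H)). ring.
Qed.

Lemma continuous_IntFrom lo f x0 :
  continuous_above lo f -> (forall x, lo < x -> improper_int_from x f (IntFrom x f)) ->
  lo < x0 -> continuous (fun x => IntFrom x f) x0.
Proof.
  intros Hf H Hx0.
  assert (Hr : 0 < x0 - lo) by lra.
  apply continuous_ext_loc with (fun x => RInt f x x0 + IntFrom x0 f).
  - exists (mkposreal _ Hr). intros x Hx.
    change (Rabs (x - x0) < x0 - lo) in Hx. apply Rabs_def2 in Hx.
    destruct (Rtotal_order x x0) as [Hlt | [-> | Hgt]].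
    + symmetry. apply (IntFrom_Chasles lo x x0 f Hf); try apply H; lra.
    + rewrite RInt_point. simpl; change (zero : R) with 0; ring.
    + rewrite (IntFrom_Chasles lo x0 x f Hf Hx0 Hgt (H x0 Hx0)).
      rewrite RInt_swap_R by (apply ex_RInt_above with lo; auto; lra). simpl; ring.
  - apply (continuous_plus (fun x => RInt f x x0) (fun _ => IntFrom x0 f)).
    + apply continuous_RInt_lower with lo; auto.
    + apply continuous_const.
Qed.

Lemma RInt_exp_opp_mul k u b : k <> 0 ->
  RInt (fun t => exp (- (k * t))) u b = (exp (- (k * u)) - exp (- (k * b))) / k.
Proof.
  intros Hk. rewrite (RInt_by_antiderivative (fun t => - exp (- (k * t)) / k)).
  - simpl; field; auto.
  - intros x _. auto_derive; auto. field; auto.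
  - intros x _. apply (ex_derive_continuous (V := R_NormedModule)). auto_derive; auto.
Qed.

Lemma RInt_exp_le k u b : 0 < k -> 0 <= u -> u <= b ->
  RInt (fun t => exp (- (k * t))) u b <= 1 / k.
Proof.
  intros Hk Hu Hub. rewrite RInt_exp_opp_mul by lra.
  assert (exp (- (k * u)) <= 1) by (rewrite <- exp_0; apply exp_le; nra).
  pose proof (exp_pos (- (k * b))).
  apply Rmult_le_compat_r; [left; apply Rinv_0_lt_compat |]; lra.
Qed.

Lemma RInt_Rpower p u b : p + 1 <> 0 -> 0 < u -> 0 < b ->
  RInt (fun t => Rpower t p) u b = (Rpower b (p + 1) - Rpower u (p + 1)) / (p + 1).
Proof.
  intros Hp Hu Hb.
  assert (Hpos : forall x, Rmin u b <= x -> 0 < x)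
    by (intros x Hx; apply Rlt_le_trans with (Rmin u b); [apply Rmin_glb_lt |]; auto).
  rewrite (RInt_by_antiderivative (fun t => Rpower t (p + 1) / (p + 1))).
  - simpl; field; auto.
  - intros x [Hx _]. pose proof (Hpos x Hx). unfold Rpower. auto_derive; auto.
    replace ((p + 1) * ln x) with (p * ln x + ln x) by ring.
    rewrite exp_plus, exp_ln by auto. field; split; lra.
  - intros x [Hx _]. pose proof (Hpos x Hx).
    apply (ex_derive_continuous (V := R_NormedModule)). unfold Rpower. auto_derive; auto.
Qed.

Lemma continuous_above_exp k : continuous_above 0 (fun t => exp (- (k * t))).
Proof. intros x _. apply (ex_derive_continuous (V := R_NormedModule)). auto_derive; auto. Qed.

Lemma continuous_above_Rpower p : continuous_above 0 (fun t => Rpower t p).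
Proof.
  intros x Hx. apply (ex_derive_continuous (V := R_NormedModule)). unfold Rpower. auto_derive; auto.
Qed.

Lemma RInt_le_exp_decay lo C k f u b :
  0 <= lo -> 0 <= C -> 0 < k -> continuous_above lo f ->
  (forall x, lo < x -> f x <= C * exp (- (k * x))) ->
  lo < u -> u < b -> RInt f u b <= C / k.
Proof.
  intros Hlo HC Hk Hf Hdecay Hu Hub.
  assert (Hexp : ex_RInt (fun t => exp (- (k * t))) u b)
    by (apply ex_RInt_above with 0; [apply continuous_above_exp | lra | lra]).
  apply Rle_trans with (RInt (fun t => C * exp (- (k * t))) u b).
  - apply RInt_le; [lra | apply ex_RInt_above with lo; auto; lra | |].
    + apply (ex_RInt_scal (V := R_NormedModule)); auto.
    + intros; apply Hdecay; lra.
  - rewrite RInt_scal_R by auto.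
    replace (C / k) with (C * (1 / k)) by (field; lra).
    apply Rmult_le_compat_l; auto. apply RInt_exp_le; lra.
Qed.

Definition gamma_integrand (s t : R) : R := Rpower t (s - 1) * exp (- t).

Lemma continuous_gamma_integrand s : continuous_above 0 (gamma_integrand s).
Proof.
  intros x Hx. apply (ex_derive_continuous (V := R_NormedModule)).
  unfold gamma_integrand, Rpower. auto_derive; auto.
Qed.

Lemma gamma_integrand_pos s t : 0 < gamma_integrand s t.
Proof. apply Rmult_lt_0_compat; [apply Rpower_pos | apply exp_pos]. Qed.

(* Near 0 the factor [exp (- t)] is dropped, near infinity the factor [t ^ (s - 1)]. *)
Lemma RInt_gamma_integrand_le s u b : 0 < s <= 1 -> 0 < u -> u < b ->
  RInt (gamma_integrand s) u b <= 1 / s + 1.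
Proof.
  intros Hs Hu Hub.
  set (u' := Rmin u 1). set (b' := Rmax b 1).
  assert (Hu' : 0 < u' <= u /\ u' <= 1)
    by (unfold u'; repeat split; [apply Rmin_glb_lt | apply Rmin_l | apply Rmin_r]; lra).
  assert (Hb' : b <= b' /\ 1 <= b') by (unfold b'; split; [apply Rmax_l | apply Rmax_r]).
  clearbody u' b'.
  assert (Hex : forall f s t, continuous_above 0 f -> 0 < s -> 0 < t -> ex_RInt f s t)
    by (intros; apply ex_RInt_above with 0; auto).
  pose proof (continuous_gamma_integrand s) as Hc.
  apply Rle_trans with (RInt (gamma_integrand s) u' b').
  { apply RInt_le_widen with 0; auto; try lra. intros; left; apply gamma_integrand_pos. }
  rewrite <- (RInt_Chasles_R _ u' 1 b') by (apply Hex; auto; lra).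
  apply Rplus_le_compat.
  - apply Rle_trans with (RInt (fun t => Rpower t (s - 1)) u' 1).
    + apply RInt_le; try lra; try (apply Hex; auto; try apply continuous_above_Rpower; lra).
      intros t Ht. unfold gamma_integrand.
      pose proof (Rpower_pos t (s - 1)).
      assert (exp (- t) <= 1) by (rewrite <- exp_0; apply exp_le; lra). nra.
    + rewrite RInt_Rpower by lra. replace (s - 1 + 1) with s by ring.
      unfold Rpower at 1. rewrite ln_1, Rmult_0_r, exp_0.
      pose proof (Rpower_pos u' s).
      unfold Rdiv. apply Rmult_le_compat_r; [left; apply Rinv_0_lt_compat |]; lra.
  - apply Rle_trans with (RInt (fun t => exp (- (1 * t))) 1 b').
    + apply RInt_le; try lra; try (apply Hex; auto; try apply continuous_above_exp; lra).
      intros t Ht. unfold gamma_integrand. rewrite Rmult_1_l.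
      assert (Rpower t (s - 1) <= 1).
      { assert (0 <= ln t) by (rewrite <- ln_1; apply ln_le; lra).
        unfold Rpower. rewrite <- exp_0 at 2. apply exp_le. nra. }
      pose proof (exp_pos (- t)). nra.
    + eapply Rle_trans; [apply RInt_exp_le | ]; lra.
Qed.

Lemma euler_gamma_pos s : 0 < s <= 1 -> 0 < euler_gamma s.
Proof.
  intros Hs. apply (IntFrom_pos 0 (1 / s + 1) (gamma_integrand s)).
  - apply continuous_gamma_integrand.
  - intros; left; apply gamma_integrand_pos.
  - intros; apply RInt_gamma_integrand_le; auto.
  - intros; apply gamma_integrand_pos.
Qed.

Lemma gamma_ext_neg d : 0 < d < 1 -> gamma_ext (- d) < 0.
Proof.
  intros Hd. unfold gamma_ext. destruct (Rlt_dec 0 (- d)) as [H | _]; [lra |].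
  pose proof (euler_gamma_pos (- d + 1) ltac:(lra)).
  unfold Rdiv. rewrite Rinv_opp.
  assert (0 < / d) by (apply Rinv_0_lt_compat; lra). nra.
Qed.

Lemma RInt_upper_gamma_integrand_le d x u b : 0 < d -> 0 < x -> x < u -> u < b ->
  RInt (gamma_integrand (- d)) u b <= Rpower x (- d) / d.
Proof.
  intros Hd Hx Hu Hub.
  apply Rle_trans with (RInt (fun t => Rpower t (- d - 1)) u b).
  - apply RInt_le; try lra.
    + apply ex_RInt_above with 0; [apply continuous_gamma_integrand | lra | lra].
    + apply ex_RInt_above with 0; [apply continuous_above_Rpower | lra | lra].
    + intros t Ht. unfold gamma_integrand. pose proof (Rpower_pos t (- d - 1)).
      assert (exp (- t) <= 1) by (rewrite <- exp_0; apply exp_le; lra). nra.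
  - rewrite RInt_Rpower by lra. replace (- d - 1 + 1) with (- d) by ring.
    pose proof (Rpower_pos b (- d)).
    assert (Rpower u (- d) <= Rpower x (- d)).
    { unfold Rpower. apply exp_le. assert (ln x <= ln u) by (apply ln_le; lra). nra. }
    unfold Rdiv. rewrite Rinv_opp.
    assert (0 < / d) by (apply Rinv_0_lt_compat; lra). nra.
Qed.

Section UpperGammaNegativeOrder.

Variables (d x : R).
Hypotheses (d_pos : 0 < d) (x_pos : 0 < x).

Let gamma_integrand_above : continuous_above x (gamma_integrand (- d)).
Proof. intros t Ht. apply continuous_gamma_integrand. lra. Qed.

Let gamma_integrand_nonneg : forall t, x < t -> 0 <= gamma_integrand (- d) t.
Proof. intros. left. apply gamma_integrand_pos. Qed.

Let gamma_integrand_bounded : forall u b, x < u -> u < b ->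
  RInt (gamma_integrand (- d)) u b <= Rpower x (- d) / d.
Proof. intros. apply RInt_upper_gamma_integrand_le; auto. Qed.

Lemma improper_upper_gamma : improper_int_from x (gamma_integrand (- d)) (upper_gamma (- d) x).
Proof. exact (improper_int_from_IntFrom _ _ _ gamma_integrand_above gamma_integrand_nonneg gamma_integrand_bounded). Qed.

Lemma upper_gamma_pos : 0 < upper_gamma (- d) x.
Proof.
  exact (IntFrom_pos _ _ _ gamma_integrand_above gamma_integrand_nonneg gamma_integrand_bounded
    (fun t _ => gamma_integrand_pos (- d) t)).
Qed.

Lemma upper_gamma_le : upper_gamma (- d) x <= Rpower x (- d) / d.
Proof. exact (IntFrom_le_bound _ _ _ gamma_integrand_above gamma_integrand_nonneg gamma_integrand_bounded _ gamma_integrand_bounded). Qed.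

End UpperGammaNegativeOrder.

Lemma continuous_upper_gamma d x : 0 < d -> 0 < x -> continuous (upper_gamma (- d)) x.
Proof.
  intros Hd Hx.
  apply (continuous_IntFrom 0 (gamma_integrand (- d)) x); auto.
  - apply continuous_gamma_integrand.
  - intros y Hy. apply improper_upper_gamma; auto.
Qed.

Lemma Rpower_le_1_plus g d : 0 < g -> 0 <= d <= 1 -> Rpower g d <= 1 + g.
Proof.
  intros Hg Hd. unfold Rpower.
  destruct (Rle_dec g 1) as [H | H].
  - assert (ln g <= 0) by (rewrite <- ln_1; apply ln_le; lra).
    apply Rle_trans with (exp 0); [apply exp_le; nra | rewrite exp_0; lra].
  - assert (0 <= ln g) by (rewrite <- ln_1; apply ln_le; lra).
    apply Rle_trans with (exp (ln g)); [apply exp_le; nra | rewrite exp_ln; lra].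
Qed.

(* Half of the exponential decay absorbs the factor [1 + g <= (1 + 2/mu) (1 + mu g / 2)]. *)
Lemma Rpower_mul_exp_le g d mu : 0 < g -> 0 <= d <= 1 -> 0 < mu ->
  Rpower g d * exp (- (mu * g)) <= (1 + 2 / mu) * exp (- (mu / 2 * g)).
Proof.
  intros Hg Hd Hmu.
  assert (H2mu : 0 < 2 / mu) by (apply Rdiv_lt_0_compat; lra).
  assert (Hpow : Rpower g d <= (1 + 2 / mu) * (1 + mu / 2 * g)).
  { eapply Rle_trans; [apply Rpower_le_1_plus; auto |].
    replace ((1 + 2 / mu) * (1 + mu / 2 * g)) with (1 + g + mu / 2 * g + 2 / mu) by (field; lra).
    nra. }
  assert (Hexp : 1 + mu / 2 * g <= exp (mu / 2 * g)) by apply exp_ineq1_le.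
  assert (Hhalf : exp (mu / 2 * g) * exp (- (mu * g)) = exp (- (mu / 2 * g)))
    by (rewrite <- exp_plus; f_equal; lra).
  pose proof (exp_pos (- (mu * g))).
  apply Rle_trans with ((1 + 2 / mu) * exp (mu / 2 * g) * exp (- (mu * g))).
  - apply Rmult_le_compat_r; nra.
  - rewrite Rmult_assoc, Hhalf. lra.
Qed.

Definition beta_integrand (mu T d G g : R) : R :=
  mu * exp (- (mu * g)) * (Rpower g d * (upper_gamma (- d) (mu * T * g) - G)).

Section BetaIntegrand.

Variables (mu T d G : R).
Hypotheses (mu_pos : 0 < mu) (T_pos : 0 < T) (d_range : 0 < d <= 1) (G_neg : G < 0).

Lemma beta_integrand_pos g : 0 < g -> 0 < beta_integrand mu T d G g.
Proof.
  intros Hg. unfold beta_integrand.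
  pose proof (upper_gamma_pos d (mu * T * g) ltac:(lra) ltac:(apply Rmult_lt_0_compat; nra)).
  apply Rmult_lt_0_compat; [apply Rmult_lt_0_compat; auto; apply exp_pos |].
  apply Rmult_lt_0_compat; [apply Rpower_pos | lra].
Qed.

(* Uses [g ^ d * Gamma (- d, mu T g) <= g ^ d (mu T g) ^ (- d) / d = (mu T) ^ (- d) / d]. *)
Lemma beta_integrand_le g : 0 < g ->
  beta_integrand mu T d G g <=
  mu * (Rpower (mu * T) (- d) / d - G * (1 + 2 / mu)) * exp (- (mu / 2 * g)).
Proof.
  intros Hg. unfold beta_integrand.
  assert (HmuT : 0 < mu * T) by nra.
  assert (HU : upper_gamma (- d) (mu * T * g) <= Rpower (mu * T * g) (- d) / d)
    by (apply upper_gamma_le; [lra | nra]).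
  assert (Hcancel : Rpower g d * Rpower (mu * T * g) (- d) = Rpower (mu * T) (- d)).
  { unfold Rpower. rewrite <- exp_plus, ln_mult by nra. f_equal. ring. }
  assert (Hfirst : Rpower g d * upper_gamma (- d) (mu * T * g) <= Rpower (mu * T) (- d) / d).
  { apply Rle_trans with (Rpower g d * (Rpower (mu * T * g) (- d) / d)).
    - apply Rmult_le_compat_l; [left; apply Rpower_pos | exact HU].
    - unfold Rdiv. rewrite <- Rmult_assoc, Hcancel. lra. }
  set (A := Rpower (mu * T) (- d) / d) in *.
  set (p := Rpower g d) in *. set (U := upper_gamma (- d) (mu * T * g)) in *.
  set (e1 := exp (- (mu * g))). set (e2 := exp (- (mu / 2 * g))).
  assert (Hdecay : p * e1 <= (1 + 2 / mu) * e2) by (apply Rpower_mul_exp_le; auto; lra).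
  assert (He : e1 <= e2) by (apply exp_le; nra).
  assert (HA : 0 < A) by (apply Rdiv_lt_0_compat; [apply Rpower_pos | lra]).
  assert (He1 : 0 < e1) by apply exp_pos.
  apply Rle_trans with (mu * e1 * (A - G * p)).
  - apply Rmult_le_compat_l; [nra | lra].
  - replace (mu * e1 * (A - G * p)) with (mu * A * e1 + mu * (- G) * (p * e1)) by ring.
    replace (mu * (A - G * (1 + 2 / mu)) * e2) with (mu * A * e2 + mu * (- G) * ((1 + 2 / mu) * e2))
      by ring.
    apply Rplus_le_compat; apply Rmult_le_compat_l; nra.
Qed.

Lemma continuous_beta_integrand : continuous_above 0 (beta_integrand mu T d G).
Proof.
  intros g Hg. unfold beta_integrand.
  apply (continuous_mult (fun g => mu * exp (- (mu * g)))).
  { apply (ex_derive_continuous (V := R_NormedModule)). auto_derive; auto. }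
  apply (continuous_mult (fun g => Rpower g d)).
  { apply continuous_above_Rpower; auto. }
  apply (continuous_minus (fun g => upper_gamma (- d) (mu * T * g)) (fun _ => G));
    [| apply continuous_const].
  apply (continuous_comp (fun g => mu * T * g) (upper_gamma (- d))).
  - apply (ex_derive_continuous (V := R_NormedModule)). auto_derive; auto.
  - apply continuous_upper_gamma; [lra | apply Rmult_lt_0_compat; nra].
Qed.

Lemma IntFrom_beta_integrand_pos : 0 < IntFrom 0 (beta_integrand mu T d G).
Proof.
  set (C := mu * (Rpower (mu * T) (- d) / d - G * (1 + 2 / mu))).
  assert (HC : 0 <= C).
  { assert (0 < Rpower (mu * T) (- d) / d) by (apply Rdiv_lt_0_compat; [apply Rpower_pos | lra]).
    assert (0 < 2 / mu) by (apply Rdiv_lt_0_compat; lra).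
    unfold C. left. apply Rmult_lt_0_compat; nra. }
  apply (IntFrom_pos 0 (C / (mu / 2))).
  - apply continuous_beta_integrand.
  - intros; left; apply beta_integrand_pos; auto.
  - intros u b Hu Hub. apply RInt_le_exp_decay with 0; auto; try lra.
    + apply continuous_beta_integrand.
    + intros; apply beta_integrand_le; auto.
  - intros; apply beta_integrand_pos; auto.
Qed.

End BetaIntegrand.

Lemma beta_fn_pos mu T alpha : 0 < mu -> 0 < T -> 2 < alpha -> 0 < beta_fn mu T alpha.
Proof.
  intros Hmu HT Halpha.
  assert (Hd : 0 < 2 / alpha < 1).
  { split; [apply Rdiv_lt_0_compat; lra |].
    apply Rmult_lt_reg_r with alpha; [lra |]. field_simplify; lra. }
  apply Rmult_lt_0_compat.
  - apply Rdiv_lt_0_compat; [| lra]. apply Rmult_lt_0_compat; [lra | apply Rpower_pos].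
  - apply (IntFrom_beta_integrand_pos mu T (2 / alpha) (gamma_ext (- (2 / alpha)))); auto; try lra.
    apply gamma_ext_neg; auto.
Qed.

Definition coverage_integrand (x bt c k r : R) : R :=
  exp (- (PI * x * r * bt) - c * Rpower r k).

Section CoverageIntegral.

Variables (bt c k : R).
Hypotheses (bt_pos : 0 < bt) (c_ge0 : 0 <= c).

Lemma continuous_coverage_integrand x : continuous_above 0 (coverage_integrand x bt c k).
Proof.
  intros r Hr. apply (ex_derive_continuous (V := R_NormedModule)).
  unfold coverage_integrand, Rpower. auto_derive; auto.
Qed.

Lemma coverage_integrand_pos x r : 0 < coverage_integrand x bt c k r.
Proof. apply exp_pos. Qed.

Lemma coverage_integrand_shift x x' r :
  coverage_integrand x' bt c k r = exp (PI * (x - x') * bt * r) * coverage_integrand x bt c k r.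
Proof. unfold coverage_integrand. rewrite <- exp_plus. f_equal. ring. Qed.

Lemma RInt_coverage_integrand_le x u b : 0 < x -> 0 < u -> u < b ->
  RInt (coverage_integrand x bt c k) u b <= 1 / (PI * x * bt).
Proof.
  intros Hx Hu Hub. pose proof PI_RGT_0.
  apply RInt_le_exp_decay with 0; try lra.
  - apply Rmult_lt_0_compat; [apply Rmult_lt_0_compat |]; lra.
  - apply continuous_coverage_integrand.
  - intros r Hr. rewrite Rmult_1_l. unfold coverage_integrand. apply exp_le.
    assert (0 <= c * Rpower r k) by (apply Rmult_le_pos; [| left; apply Rpower_pos]; lra).
    replace (PI * x * bt * r) with (PI * x * r * bt) by ring. lra.
Qed.

Lemma RInt_coverage_integrand_le_IntFrom x : 0 < x ->
  RInt (coverage_integrand x bt c k) 1 2 <= IntFrom 0 (coverage_integrand x bt c k).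
Proof.
  intros Hx. apply (RInt_le_IntFrom 0 (1 / (PI * x * bt))); try lra.
  - apply continuous_coverage_integrand.
  - intros; left; apply coverage_integrand_pos.
  - intros; apply RInt_coverage_integrand_le; auto.
Qed.

(* Lowering [x] by [x - x'] multiplies the integrand by [exp (PI (x - x') bt r) >= 1 + PI (x - x') bt] on [1, 2]. *)
Lemma IntFrom_coverage_integrand_gap x' x : 0 < x' -> x' < x ->
  IntFrom 0 (coverage_integrand x bt c k) +
    PI * (x - x') * bt * RInt (coverage_integrand x bt c k) 1 2
  <= IntFrom 0 (coverage_integrand x' bt c k).
Proof.
  intros Hx' Hx'x. pose proof PI_RGT_0.
  assert (Hrate : 0 < PI * (x - x') * bt) by (apply Rmult_lt_0_compat; [apply Rmult_lt_0_compat |]; lra).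
  assert (Hgrowth : forall r, 0 < r ->
    PI * (x - x') * bt * r * coverage_integrand x bt c k r
    <= coverage_integrand x' bt c k r - coverage_integrand x bt c k r).
  { intros r Hr. rewrite (coverage_integrand_shift x x').
    pose proof (exp_ineq1_le (PI * (x - x') * bt * r)).
    pose proof (coverage_integrand_pos x r). nra. }
  set (f := coverage_integrand x bt c k). set (g := coverage_integrand x' bt c k) in *.
  assert (Hex : forall h, continuous_above 0 h -> ex_RInt h 1 2)
    by (intros; apply ex_RInt_above with 0; auto; lra).
  eapply Rle_trans; [| apply (IntFrom_add_RInt_le 0 (1 / (PI * x' * bt)) f g 1 2); try lra].
  - apply Rplus_le_compat_l.
    rewrite <- RInt_scal_R by (apply Hex, continuous_coverage_integrand).
    apply RInt_le; try lra.
    + apply (ex_RInt_scal (V := R_NormedModule)). apply Hex, continuous_coverage_integrand.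
    + apply Hex. intros r Hr. apply (continuous_minus g f); apply continuous_coverage_integrand; auto.
    + intros r Hr. eapply Rle_trans; [| apply Hgrowth; lra].
      assert (0 < PI * (x - x') * bt * f r) by (apply Rmult_lt_0_compat; [| apply coverage_integrand_pos]; lra).
      unfold f in *. nra.
  - apply continuous_coverage_integrand.
  - apply continuous_coverage_integrand.
  - intros r Hr. pose proof (Hgrowth r Hr). pose proof (coverage_integrand_pos x r).
    assert (0 <= PI * (x - x') * bt * r * f r)
      by (left; apply Rmult_lt_0_compat; [apply Rmult_lt_0_compat; lra | apply coverage_integrand_pos]).
    unfold f in *. lra.
  - intros; apply RInt_coverage_integrand_le; auto.
Qed.

End CoverageIntegral.

(* A first-order gain [kap * eps] in one factor beats a second-order loss [eps * eps] in the other. *)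
Lemma product_gain P I kap m : 0 < P -> 0 <= I -> 0 < kap -> 0 < m ->
  exists eps, 0 < eps < m /\ P * I < (P - eps * eps) * (I + kap * eps).
Proof.
  intros HP HI Hkap Hm.
  set (q := P * kap / (2 * (I + kap))).
  assert (Hq : 0 < q) by (apply Rdiv_lt_0_compat; nra).
  assert (Heps : 0 < Rmin (m / 2) (Rmin 1 q) <= m / 2 /\ Rmin (m / 2) (Rmin 1 q) <= 1 /\
                 Rmin (m / 2) (Rmin 1 q) <= q).
  { pose proof (Rmin_l (m / 2) (Rmin 1 q)); pose proof (Rmin_r (m / 2) (Rmin 1 q)).
    pose proof (Rmin_l 1 q); pose proof (Rmin_r 1 q).
    assert (0 < Rmin (m / 2) (Rmin 1 q)) by (repeat apply Rmin_glb_lt; lra).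
    lra. }
  set (eps := Rmin (m / 2) (Rmin 1 q)) in *.
  exists eps. split; [lra |].
  assert (Hsmall : eps * (I + kap) <= P * kap / 2).
  { apply Rle_trans with (q * (I + kap)); [apply Rmult_le_compat_r; lra |].
    right. unfold q. field. lra. }
  assert (Hloss : eps * eps * (I + kap * eps) <= eps * (P * kap / 2)).
  { rewrite Rmult_assoc. apply Rmult_le_compat_l; [lra |].
    apply Rle_trans with (eps * (I + kap)); [apply Rmult_le_compat_l; nra | exact Hsmall]. }
  assert (0 < P * kap * eps) by (apply Rmult_lt_0_compat; [apply Rmult_lt_0_compat |]; lra).
  replace ((P - eps * eps) * (I + kap * eps)) with (P * I + P * kap * eps - eps * eps * (I + kap * eps))
    by ring.
  lra.
Qed.

Lemma DSR_eq lam a mu sigma2 T alpha g :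
  DSR lam a mu sigma2 T alpha g =
  PI * lam * lam * ((a - g) * g) *
  IntFrom 0 (coverage_integrand (lam * g) (beta_fn mu T alpha) (mu * T * sigma2) (alpha / 2)).
Proof. unfold DSR, p_cov, coverage_integrand. ring. Qed.

Lemma DSR_lt_shift_left lam a mu sigma2 T alpha g :
  0 < lam -> 0 < T -> 0 < mu -> 0 <= sigma2 -> 2 < alpha -> a / 2 <= g < a ->
  exists g', 0 < g' < a /\ DSR lam a mu sigma2 T alpha g < DSR lam a mu sigma2 T alpha g'.
Proof.
  intros Hlam HT Hmu Hs Halpha Hg.
  pose proof PI_RGT_0 as HPI.
  set (bt := beta_fn mu T alpha). set (c := mu * T * sigma2). set (k := alpha / 2).
  assert (Hbt : 0 < bt) by (apply beta_fn_pos; auto).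
  assert (Hc : 0 <= c) by (apply Rmult_le_pos; [nra | auto]).
  set (I := fun x => IntFrom 0 (coverage_integrand x bt c k)).
  set (x := lam * g).
  set (Q := RInt (coverage_integrand x bt c k) 1 2).
  assert (HQ : 0 < Q).
  { apply RInt_gt_0; [lra | intros; apply coverage_integrand_pos |].
    intros; apply continuous_coverage_integrand; lra. }
  assert (HIQ : Q <= I x) by (apply RInt_coverage_integrand_le_IntFrom; auto; unfold x; nra).
  set (P := (a - g) * g).
  set (kap := PI * lam * bt * Q).
  assert (Hkap : 0 < kap)
    by (unfold kap; apply Rmult_lt_0_compat; [apply Rmult_lt_0_compat; [apply Rmult_lt_0_compat |] |]; lra).
  destruct (product_gain P (I x) kap g) as [eps [Heps Hgain]]; try (unfold P; nra); try lra.
  exists (g - eps). split; [lra |].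
  rewrite !DSR_eq. fold bt c k.
  assert (Hgap : I x + kap * eps <= I (lam * (g - eps))).
  { replace (kap * eps) with (PI * (x - lam * (g - eps)) * bt * Q) by (unfold kap, x; ring).
    apply IntFrom_coverage_integrand_gap; auto; unfold x; nra. }
  assert (HP : P - eps * eps <= (a - (g - eps)) * (g - eps)) by (unfold P; nra).
  assert (HP' : 0 < (a - (g - eps)) * (g - eps)) by nra.
  assert (P * I x < (a - (g - eps)) * (g - eps) * I (lam * (g - eps))).
  { eapply Rlt_le_trans; [apply Hgain |].
    apply Rle_trans with ((a - (g - eps)) * (g - eps) * (I x + kap * eps)).
    - apply Rmult_le_compat_r; nra.
    - apply Rmult_le_compat_l; lra. }
  assert (0 < PI * lam * lam) by (apply Rmult_lt_0_compat; [apply Rmult_lt_0_compat |]; lra).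
  unfold I, P, x in *. nra.
Qed.

Theorem lemma1 (lam T mu sigma2 alpha a gamma1s : R) :
  0 < lam -> 0 < T -> 0 < mu -> 0 <= sigma2 -> 2 < alpha ->
  0 < a -> a <= 1 ->
  0 < gamma1s < a ->
  (forall gamma1, 0 < gamma1 < a ->
     DSR lam a mu sigma2 T alpha gamma1 <= DSR lam a mu sigma2 T alpha gamma1s) ->
  gamma1s < a / 2 /\ a / 2 < a - gamma1s /\ a - gamma1s < a /\ a <= 1.
Proof.
  intros Hlam HT Hmu Hs Halpha Ha Ha1 Hg Hmax.
  destruct (Rlt_dec gamma1s (a / 2)) as [Hlt | Hge]; [lra | exfalso].
  destruct (DSR_lt_shift_left lam a mu sigma2 T alpha gamma1s) as [g' [Hg' Hlt]]; auto; try lra.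
  pose proof (Hmax g' Hg'). lra.
Qed.
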